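(* Let $(X_j,Y_j,S_j)$, $j\in\mathbb{Z}$, be a FAIM process. Then there exists a non-increasing sequence $\psi(N)$ with $\psi(N)\to1$ as $N\to\infty$ and $\psi(0)<\infty$ such that for all $N>M\ge L\ge1$, \[P_{X_1^L,Y_1^L,X_{M+1}^N,Y_{M+1}^N}\le\psi(M-L)\cdot P_{X_1^L,Y_1^L}\cdot P_{X_{M+1}^N,Y_{M+1}^N}\] (pointwise, for all realizations).
   Context: FAIM process: $(X_j,Y_j,S_j)$, $j\in\mathbb{Z}$, is strictly stationary, $X_j\in\{0,1\}$, $Y_j$ takes values in a finite alphabet, $S_j$ in a finite set $\mathcal{S}$; the conditional law $P_{X_j,Y_j,S_j|S_{j-1}}$ does not depend on $j$; and conditioned on $S_{j-1}$, $\{X_k,Y_k,S_k\}_{k\ge j}$ is independent of $\{X_l,Y_l,S_{l-1}\}_{l<j}$. The state sequence $(S_j)$ is a homogeneous, finite-state, stationary, aperiodic and irreducible Markov chain. *)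

From HB Require Import structures.
From mathcomp Require Import all_boot all_order all_algebra.
From mathcomp Require Import all_classical all_reals all_analysis.
Set Implicit Arguments. Unset Strict Implicit. Unset Printing Implicit Defensive.
Import Order.TTheory GRing.Theory Num.Theory.
Local Open Scope classical_set_scope.
Local Open Scope ring_scope.

Definition Pr (R : realType) (d : measure_display) (T : measurableType d)
  (P : probability T R) (A : set T) : R := fine (P A).

Section FAIM.
Context (R : realType) (d : measure_display) (T : measurableType d)
  (B St : finType) (P : probability T R)
  (X : int -> T -> bool) (Y : int -> T -> B) (S : int -> T -> St).

Definition cylXYS (I : seq int) (t : int) (a : int -> bool) (b : int -> B)
  (c : int -> St) : set T :=
  [set w | forall k, k \in I -> [/\ X (k + t) w = a k, Y (k + t) w = b k
                                  & S (k + t) w = c k]].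

Definition futureXYS (j : int) (n : nat) (a : int -> bool) (b : int -> B)
  (c : int -> St) : set T :=
  [set w | forall k : nat, (k < n)%N ->
     [/\ X (j + k%:Z) w = a (j + k%:Z), Y (j + k%:Z) w = b (j + k%:Z)
       & S (j + k%:Z) w = c (j + k%:Z)]].

Definition pastXYS (j : int) (m : nat) (a : int -> bool) (b : int -> B)
  (c : int -> St) : set T :=
  [set w | forall k : nat, (1 <= k <= m)%N ->
     [/\ X (j - k%:Z) w = a (j - k%:Z), Y (j - k%:Z) w = b (j - k%:Z)
       & S (j - k%:Z - 1) w = c (j - k%:Z)]].

Definition pastS (j : int) (m : nat) (c : nat -> St) : set T :=
  [set w | forall k : nat, (1 <= k <= m)%N -> S (j - 1 - k%:Z) w = c k].

Definition ptransS (n : nat) (s s' : St) : R :=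
  Pr P ([set w | S 0 w = s] `&` [set w | S n%:Z w = s']) /
  Pr P [set w | S 0 w = s].

Record FAIM : Prop := {
  FAIM_measX : forall k x, measurable (X k @^-1` [set x]);
  FAIM_measY : forall k y, measurable (Y k @^-1` [set y]);
  FAIM_measS : forall k s, measurable (S k @^-1` [set s]);
  FAIM_stationary : forall I t a b c, Pr P (cylXYS I t a b c) = Pr P (cylXYS I 0 a b c);
  FAIM_homogeneous : forall (j j' : int) x y s s0,
    Pr P ([set w | [/\ X j w = x, Y j w = y, S j w = s & S (j - 1) w = s0]]) /
      Pr P [set w | S (j - 1) w = s0] =
    Pr P ([set w | [/\ X j' w = x, Y j' w = y, S j' w = s & S (j' - 1) w = s0]]) /
      Pr P [set w | S (j' - 1) w = s0];
  FAIM_condindep : forall j n m a b c a' b' c' s0,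
    let C := [set w | S (j - 1) w = s0] in
    Pr P (futureXYS j n a b c `&` C `&` pastXYS j m a' b' c') * Pr P C =
    Pr P (futureXYS j n a b c `&` C) * Pr P (C `&` pastXYS j m a' b' c');
  FAIM_S_markov : forall j m s s0 c,
    let C := [set w | S (j - 1) w = s0] in
    Pr P ([set w | S j w = s] `&` C `&` pastS j m c) * Pr P C =
    Pr P ([set w | S j w = s] `&` C) * Pr P (C `&` pastS j m c);
  FAIM_irreducible : forall s s', exists n : nat, (0 < n)%N /\ 0 < ptransS n s s';
  FAIM_aperiodic : forall s, ~ exists dd : nat, (1 < dd)%N /\
     forall n : nat, (0 < n)%N -> 0 < ptransS n s s -> (dd %| n)%N
}.

Definition blockXY (lo hi : nat) (x : int -> bool) (y : int -> B) : set T :=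
  [set w | forall k : nat, (lo <= k <= hi)%N ->
     X k%:Z w = x k%:Z /\ Y k%:Z w = y k%:Z].

End FAIM.

(* Split the two blocks A = {(X,Y)_1^L = ...} and B = {(X,Y)_(M+1)^N = ...} along
   the states S_L = s and S_M = s'. Conditional independence of past and future
   given the current state, used at times L and M, yields
     P(A, B, S_L = s, S_M = s') pi(s') = P(A, S_L = s) P(B, S_M = s') p^(M-L)(s, s'),
   with p^n the n-step kernel and pi the stationary law of the state chain. The
   chain is finite, irreducible and aperiodic, so some power of its kernel has all
   entries >= dl > 0; coupling two copies of the chain then shows that the
   oscillation osc n = max (p^n(i,k) - p^n(j,k)) decays geometrically, and
   p^n(s, s') <= psi(n) pi(s') with psi(n) = 1 + osc n / min pi, which is
   nonincreasing and tends to 1. Summing over s and s' gives the claim. *)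

From HB Require Import structures.
From mathcomp Require Import all_boot all_order all_algebra.
From mathcomp Require Import all_classical all_reals all_analysis.
From mathcomp Require Import zify ring lra.
Set Implicit Arguments. Unset Strict Implicit. Unset Printing Implicit Defensive.
Import Order.TTheory GRing.Theory Num.Theory numFieldNormedType.Exports.
Local Open Scope classical_set_scope.
Local Open Scope ring_scope.

(** * Additively closed sets of natural numbers *)

Section AddClosedSet.
Variable Q : nat -> Prop.
Hypothesis Q_add : forall a b, Q a -> Q b -> Q (a + b)%N.
Hypothesis Q_gt0 : forall n, Q n -> (0 < n)%N.

Let Q0 n := n = 0%N \/ Q n.

Let Q0_add a b : Q0 a -> Q0 b -> Q0 (a + b)%N.
Proof.
case=> [->|Qa]; first by rewrite add0n.
by case=> [->|Qb]; [rewrite addn0; right | right; apply: Q_add].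
Qed.

Let Q0_mul q b : Q0 b -> Q0 (q * b)%N.
Proof. by move=> Qb; elim: q => [|q IH]; [left | rewrite mulSn; apply: Q0_add]. Qed.

Let Q_mul q b : (0 < q)%N -> Q b -> Q (q * b)%N.
Proof.
case: q => // q _ Qb; rewrite mulSn.
by have [->|] := Q0_mul q (or_intror Qb); [rewrite addn0 | apply: Q_add].
Qed.

(* The least positive difference [d] of two elements of [Q ∪ {0}] divides every
   element of [Q]: a remainder modulo [d] is again such a difference. *)
Lemma add_closed_consecutive : (exists n, Q n) ->
  ~ (exists dd : nat, (1 < dd)%N /\ forall n, Q n -> (dd %| n)%N) ->
  exists b, Q b.+1 /\ Q0 b.
Proof.
move=> [n0 Qn0] aper.
pose D r := exists a b, [/\ Q0 a, Q0 b & a = (b + r)%N].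
have exD : exists r, `[< (0 < r)%N /\ D r >].
  exists n0; apply/asboolP; split; first exact: Q_gt0.
  by exists n0, 0%N; split; [right | left | rewrite add0n].
case: (ex_minnP exD) => d /asboolP [d_gt0 [a [b [Qa Qb ab]]]] d_min.
have d_dvd s : Q s -> (d %| s)%N.
  move=> Qs; apply/eqP; have s_eq := divn_eq s d.
  have r_lt : (s %% d < d)%N by rewrite ltn_pmod.
  set q := (s %/ d)%N in s_eq *; set r := (s %% d)%N in s_eq r_lt *.
  have [//|r_gt0] := posnP r.
  have : (d <= r)%N.
    apply: d_min; apply/asboolP; split => //.
    exists (s + q * b)%N, (q * a)%N; split.
    - by apply: Q0_add; [right | apply: Q0_mul].
    - exact: Q0_mul.
    - by rewrite ab {1}s_eq; lia.
  by rewrite leqNgt r_lt.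
have d1 : d = 1%N.
  case: (ltngtP d 1) => [|d_gt1|//]; first by rewrite ltnS leqn0 => /eqP d0; rewrite d0 in d_gt0.
  by case: aper; exists d.
exists b; split => //; rewrite -addn1 -d1 -ab.
by case: Qa => // a0; move: ab; rewrite a0 d1 addn1.
Qed.

Lemma add_closed_eventually : (exists n, Q n) ->
  ~ (exists dd : nat, (1 < dd)%N /\ forall n, Q n -> (dd %| n)%N) ->
  exists N, forall n, (N <= n)%N -> Q n.
Proof.
move=> exQ aper; have [b [Qb1 Qb]] := add_closed_consecutive exQ aper.
have [b0|b_gt0] := posnP b.
  by rewrite b0 in Qb1; exists 1%N => n n_gt0; rewrite -(muln1 n); apply: Q_mul.
have {Qb} Qb : Q b by case: Qb => // b0; rewrite b0 in b_gt0.
(* beyond [b^2], write [n = (q - r) b + r (b + 1)] with [n = q b + r], [r < b <= q] *)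
exists (b * b)%N => n nbb; have n_eq := divn_eq n b.
have r_lt : (n %% b < b)%N by rewrite ltn_pmod.
set q := (n %/ b)%N in n_eq *; set r := (n %% b)%N in n_eq r_lt *.
have b_le_q : (b <= q)%N by rewrite leqNgt; apply/negP => q_lt; move: nbb; rewrite n_eq; nia.
have -> : n = ((q - r) * b + r * b.+1)%N by rewrite n_eq; nia.
have Qqrb : Q ((q - r) * b)%N by apply: Q_mul => //; lia.
by have [->|Qrb] := Q0_mul r (or_intror Qb1); [rewrite addn0 | apply: Q_add].
Qed.

End AddClosedSet.

(** * Convergence of a finite irreducible aperiodic kernel *)

Section FiniteMarkovKernel.
Variables (R : realType) (St : finType) (p : nat -> St -> St -> R) (pi : St -> R).
Hypotheses (p_ge0 : forall n i k, 0 <= p n i k)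
  (p_sum1 : forall n i, \sum_k p n i k = 1)
  (p_CK : forall m n i k, p (m + n)%N i k = \sum_j p m i j * p n j k)
  (pi_invariant : forall n k, \sum_i pi i * p n i k = pi k)
  (pi_gt0 : forall s, 0 < pi s) (pi_sum1 : \sum_s pi s = 1)
  (p_irreducible : forall s s', exists n : nat, (0 < n)%N /\ 0 < p n s s')
  (p_aperiodic : forall s, ~ exists dd : nat, (1 < dd)%N /\
     forall n : nat, (0 < n)%N -> 0 < p n s s -> (dd %| n)%N).

Lemma p_le1 n i k : p n i k <= 1.
Proof. by rewrite -(p_sum1 n i) (bigD1 k) //= lerDl sumr_ge0. Qed.

Lemma mul_p_le_p_add a b i j k : p a i j * p b j k <= p (a + b) i k.
Proof. by rewrite p_CK (bigD1 j) //= lerDl sumr_ge0 // => l _; rewrite mulr_ge0. Qed.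

Lemma p_diag_eventually_gt0 s : exists N, forall n, (N <= n)%N -> 0 < p n s s.
Proof.
have [||||N HN] := @add_closed_eventually (fun n => (0 < n)%N /\ 0 < p n s s).
- move=> a b [a_gt0 pa] [_ pb]; split; first by rewrite addn_gt0 a_gt0.
  by apply: lt_le_trans (mul_p_le_p_add a b s s s); rewrite mulr_gt0.
- by move=> n [].
- exact: p_irreducible.
- move=> [dd [dd_gt1 dvd]]; apply: (p_aperiodic (s := s)).
  by exists dd; split => // n *; apply: dvd.
- by exists N => n /HN [].
Qed.

Lemma p_eventually_gt0 : exists n0, forall i k, 0 < p n0 i k.
Proof.
have [N HN] := choice p_diag_eventually_gt0.
have [r Hr] := choice (fun q : St * St => p_irreducible q.1 q.2).
exists (\max_s N s + \max_q r q)%N => i k.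
have r_le := leq_bigmax (F := r) (i, k); have N_le := leq_bigmax (F := N) i.
have r_le_n0 : (r (i, k) <= \max_s N s + \max_q r q)%N by lia.
rewrite -(subnK r_le_n0); apply: lt_le_trans (mul_p_le_p_add _ _ i i k).
by rewrite mulr_gt0 //; [apply: HN; lia | case: (Hr (i, k))].
Qed.

Lemma p_doeblin : exists n0 dl, [/\ 0 < dl, dl <= 1 & forall i k, dl <= p n0 i k].
Proof.
have [n0 p_gt0] := p_eventually_gt0.
exists n0, (\big[Order.min/1]_(q : St * St) p n0 q.1 q.2); split.
- by apply: lt_bigmin => // q _; apply: p_gt0.
- exact: bigmin_le_id.
- by move=> i k; apply: (bigmin_le _ (i, k) (fun q : St * St => p n0 q.1 q.2)).
Qed.

Definition osc n := \big[Order.max/0]_(q : St * St * St) (p n q.1.1 q.2 - p n q.1.2 q.2).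

Lemma osc_ge n i j k : p n i k - p n j k <= osc n.
Proof. exact: (le_bigmax 0 (fun q : St * St * St => p n q.1.1 q.2 - p n q.1.2 q.2) (i, j, k)). Qed.

Lemma osc_ge0 n : 0 <= osc n.
Proof. exact: bigmax_ge_id. Qed.

Lemma osc_le n c : 0 <= c -> (forall i j k, p n i k - p n j k <= c) -> osc n <= c.
Proof. by move=> c_ge0 h; apply: bigmax_le => // q _; apply: h. Qed.

Lemma osc_le1 n : osc n <= 1.
Proof. by apply: osc_le => // i j k; rewrite lerBlDr (le_trans (p_le1 n i k)) // lerDl. Qed.

Lemma sum_p_mul_p a i j c : \sum_l \sum_l' p a i l * p a j l' * c = c.
Proof.
under eq_bigr => l _ do rewrite -big_distrl -big_distrr /= p_sum1 mulr1.
by rewrite -big_distrl /= p_sum1 mul1r.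
Qed.

(* the weights [p a i l * p a j l'] couple two copies of the chain started at [i], [j] *)
Lemma p_add_diff a n i j k : p (a + n) i k - p (a + n) j k =
  \sum_l \sum_l' p a i l * p a j l' * (p n l k - p n l' k).
Proof.
have -> : p (a + n) i k = \sum_l \sum_l' p a i l * p a j l' * p n l k.
  rewrite p_CK; apply: eq_bigr => l _.
  by rewrite -big_distrl -big_distrr /= p_sum1 mulr1.
have -> : p (a + n) j k = \sum_l \sum_l' p a i l * p a j l' * p n l' k.
  rewrite exchange_big p_CK; apply: eq_bigr => l' _.
  by rewrite -big_distrl /= -big_distrl /= p_sum1 mul1r.
by rewrite -sumrB; apply: eq_bigr => l _; rewrite -sumrB; apply: eq_bigr => l' _; rewrite mulrBr.
Qed.

Lemma osc_add_le a n : osc (a + n) <= osc n.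
Proof.
apply: osc_le => [|i j k]; first exact: osc_ge0.
rewrite p_add_diff -(sum_p_mul_p a i j (osc n)).
by do 2![apply: ler_sum => ? _]; rewrite ler_wpM2l ?mulr_ge0 ?osc_ge.
Qed.

Lemma osc_nonincreasing m n : (m <= n)%N -> osc n <= osc m.
Proof. by move=> mn; rewrite -(subnK mn) osc_add_le. Qed.

(* the diagonal of the coupling, of mass at least [dl], contributes nothing *)
Lemma osc_contract n0 dl n : dl <= 1 -> (forall i k, dl <= p n0 i k) ->
  osc (n0 + n) <= (1 - dl) * osc n.
Proof.
move=> dl_le1 dl_le; apply: osc_le => [|i j k]; first by rewrite mulr_ge0 ?osc_ge0 ?subr_ge0.
set w := fun l l' => p n0 i l * p n0 j l'.
have term_le l l' : w l l' * (p n l k - p n l' k) <= (w l l' - (l == l')%:R * w l l') * osc n.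
  case: (eqVneq l l') => [<-|_]; first by rewrite !subrr mul1r subrr !mul0r mulr0.
  by rewrite mul0r subr0 ler_wpM2l ?mulr_ge0 ?osc_ge.
rewrite p_add_diff.
apply: le_trans (_ : \sum_l \sum_l' (w l l' - (l == l')%:R * w l l') * osc n <= _).
  by do 2![apply: ler_sum => ? _]; apply: term_le.
have diag l : \sum_l' (l == l')%:R * w l l' * osc n = w l l * osc n.
  rewrite (bigD1 l) //= eqxx mul1r big1 ?addr0 // => l' /negbTE.
  by rewrite eq_sym => ->; rewrite !mul0r.
have row l : \sum_l' (w l l' - (l == l')%:R * w l l') * osc n =
    \sum_l' w l l' * osc n - w l l * osc n.
  by under eq_bigr => l' _ do rewrite mulrBl; rewrite sumrB diag.
under eq_bigr => l _ do rewrite row.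
rewrite sumrB sum_p_mul_p -big_distrl /= -{1}[osc n]mul1r -mulrBl ler_wpM2r ?osc_ge0 // lerB //.
by rewrite -[dl]mul1r -(p_sum1 n0 i) big_distrl /= ler_sum // => l _; rewrite ler_wpM2l.
Qed.

Lemma osc_iter n0 dl k : dl <= 1 -> (forall i k, dl <= p n0 i k) ->
  osc (k * n0) <= (1 - dl) ^+ k.
Proof.
move=> dl_le1 dl_le; elim: k => [|k IH]; first by rewrite mul0n expr0 osc_le1.
rewrite mulSn exprS (le_trans (osc_contract (k * n0) dl_le1 dl_le)) // ler_wpM2l //.
by rewrite subr_ge0.
Qed.

Lemma osc_cvg0 : osc n @[n --> \oo] --> (0 : R).
Proof.
have [n0 [dl [dl_gt0 dl_le1 dl_le]]] := p_doeblin.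
have q_lt1 : `|1 - dl| < 1 by rewrite ger0_norm ?subr_ge0 // ltrBlDr ltrDl.
apply/cvgrPdist_le => e e_gt0.
have /cvgrPdist_le/(_ e e_gt0) [K _ HK] := cvg_expr q_lt1.
exists (K * n0)%N => // n /= Kn; rewrite sub0r normrN ger0_norm ?osc_ge0 //.
apply: le_trans (osc_nonincreasing Kn) _; apply: le_trans (osc_iter K dl_le1 dl_le) _.
by have := HK K (leqnn K); rewrite /= sub0r normrN; apply: le_trans; apply: ler_norm.
Qed.

Lemma p_le_psi_pi : exists psi : nat -> R,
  [/\ (forall n, psi n.+1 <= psi n), psi n @[n --> \oo] --> (1 : R) &
      forall n s s', p n s s' <= psi n * pi s'].
Proof.
pose pm := \big[Order.min/1]_s pi s.
have pm_gt0 : 0 < pm by apply: lt_bigmin => // s _; apply: pi_gt0.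
have pm_le s : pm <= pi s by apply: (bigmin_le _ s pi).
exists (fun n => 1 + osc n / pm); split.
- by move=> n; rewrite lerD2l ler_pM2r ?invr_gt0 //; apply: osc_nonincreasing.
- rewrite -[X in _ --> X]addr0; apply: cvgD; first exact: cvg_cst.
  by rewrite -(mul0r pm^-1); apply: cvgMl; apply: osc_cvg0.
- move=> n s s'.
  have p_sub_pi : p n s s' - pi s' <= osc n.
    rewrite -{1}[p n s s']mulr1 -pi_sum1 -(pi_invariant n s') mulr_sumr -sumrB.
    rewrite -[osc n]mul1r -pi_sum1 big_distrl /= ler_sum // => j _.
    by rewrite [p n s s' * _]mulrC -mulrBr ler_pM2l ?pi_gt0 ?osc_ge.
  rewrite mulrDl mul1r -lerBlDl (le_trans p_sub_pi) // -mulrA ler_peMr ?osc_ge0 //.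
  by rewrite ler_pdivlMl // mulr1.
Qed.

End FiniteMarkovKernel.

(** * Events determined by a finite-valued map *)

Definition determined_by (T V : Type) (f : T -> V) (Z : set T) :=
  forall w w', f w = f w' -> Z w -> Z w'.

Lemma fiber_cases (T V : Type) (f : T -> V) (Z : set T) (v : V) :
  Z `&` f @^-1` [set v] = set0 \/ exists2 w, Z w & v = f w.
Proof.
have [[w [Zw <-]]|none] := pselect (exists w, Z w /\ f w = v); first by right; exists w.
by left; apply/seteqP; split => w //= [Zw fw]; apply: none; exists w.
Qed.

Lemma determined_fiberE (T V : Type) (f : T -> V) Z w : determined_by f Z -> Z w ->
  Z `&` f @^-1` [set f w] = f @^-1` [set f w].
Proof.
by move=> detZ Zw; apply/seteqP; split => w' /= => [[]//|fw']; split => //; apply: detZ Zw.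
Qed.

Section ProbabilityBasics.
Context (R : realType) (d : measure_display) (T : measurableType d) (P : probability T R).

Lemma Pr_ge0 A : 0 <= Pr P A.
Proof. by rewrite /Pr fine_ge0 // measure_ge0. Qed.

Lemma Pr_set0 : Pr P set0 = 0.
Proof. by rewrite /Pr measure0. Qed.

Lemma Pr_setU A B : measurable A -> measurable B -> A `&` B = set0 ->
  Pr P (A `|` B) = Pr P A + Pr P B.
Proof. by move=> mA mB AB0; rewrite /Pr measureU // fineD // fin_num_measure. Qed.

End ProbabilityBasics.

Section FiniteFibers.
Context (d : measure_display) (T : measurableType d) (V : finType) (f : T -> V).

Let fibers_cover Z : Z = [set w | Z w /\ f w \in index_enum V].
Proof. by apply/seteqP; split => w /= => [Zw|[]//]; rewrite mem_index_enum. Qed.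

Let fibers_cons Z v r : [set w | Z w /\ f w \in v :: r] =
  (Z `&` f @^-1` [set v]) `|` [set w | Z w /\ f w \in r].
Proof.
apply/seteqP; split => w /=; first by case=> Zw; rewrite inE => /orP [/eqP|]; [left | right].
by case=> [[Zw ->]|[Zw fw]]; rewrite inE ?eqxx ?fw ?orbT.
Qed.

Let fibers_nil Z : [set w | Z w /\ f w \in [::]] = set0.
Proof. by apply/seteqP; split => w // []. Qed.

Let measurable_fibers_seq Z (r : seq V) : (forall v, measurable (Z `&` f @^-1` [set v])) ->
  measurable [set w | Z w /\ f w \in r].
Proof.
move=> mZ; elim: r => [|v r IH]; first by rewrite fibers_nil.
by rewrite fibers_cons; apply: measurableU.
Qed.

Lemma measurable_fibers Z : (forall v, measurable (Z `&` f @^-1` [set v])) -> measurable Z.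
Proof. by move=> mZ; rewrite (fibers_cover Z); apply: measurable_fibers_seq. Qed.

Lemma Pr_sum_fibers (R : realType) (P : probability T R) Z :
  (forall v, measurable (Z `&` f @^-1` [set v])) ->
  Pr P Z = \sum_v Pr P (Z `&` f @^-1` [set v]).
Proof.
move=> mZ; rewrite {1}(fibers_cover Z).
elim: (index_enum V) (index_enum_uniq V) => [|v r IH /andP [vr ur]].
  by rewrite fibers_nil big_nil Pr_set0.
rewrite fibers_cons Pr_setU ?big_cons ?IH //.
  exact: measurable_fibers_seq.
by apply/seteqP; split => w //= [[_ fw] [_]]; rewrite fw (negbTE vr).
Qed.

Hypothesis mf : forall v, measurable (f @^-1` [set v]).

Lemma measurable_determined_fiber Z v : determined_by f Z -> measurable (Z `&` f @^-1` [set v]).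
Proof.
by move=> detZ; case: (@fiber_cases _ _ f Z v) => [->//|[w Zw ->]]; rewrite determined_fiberE.
Qed.

Lemma measurable_determined Z : determined_by f Z -> measurable Z.
Proof. by move=> detZ; apply: measurable_fibers => v; apply: measurable_determined_fiber. Qed.

End FiniteFibers.

Lemma Pr_setI_determined (R : realType) (d : measure_display) (T : measurableType d)
  (P : probability T R) (V W : finType) (f : T -> V) (g : T -> W) (Z1 Z2 : set T) (c : R) :
  (forall v, measurable (f @^-1` [set v])) -> (forall u, measurable (g @^-1` [set u])) ->
  determined_by f Z1 -> determined_by g Z2 ->
  (forall w1 w2, Z1 w1 -> Z2 w2 ->
    Pr P (f @^-1` [set f w1] `&` g @^-1` [set g w2]) * c =
    Pr P (f @^-1` [set f w1]) * Pr P (g @^-1` [set g w2])) ->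
  Pr P (Z1 `&` Z2) * c = Pr P Z1 * Pr P Z2.
Proof.
move=> mf mg det1 det2 atoms.
have split v u : Z1 `&` Z2 `&` f @^-1` [set v] `&` g @^-1` [set u] =
    (Z1 `&` f @^-1` [set v]) `&` (Z2 `&` g @^-1` [set u]).
  by apply/seteqP; split => w /=; tauto.
have m1 v := measurable_determined_fiber mf v det1.
have m2 u := measurable_determined_fiber mg u det2.
have m12 v : measurable (Z1 `&` Z2 `&` f @^-1` [set v]).
  by apply: (measurable_fibers (f := g)) => u; rewrite split; apply: measurableI.
rewrite (Pr_sum_fibers P m12) (Pr_sum_fibers P m1) (Pr_sum_fibers P m2) big_distrlr /= mulr_suml.
apply: eq_bigr => v _.
have m12_fib u : measurable (Z1 `&` Z2 `&` f @^-1` [set v] `&` g @^-1` [set u]).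
  by rewrite split; apply: measurableI.
rewrite (Pr_sum_fibers P m12_fib) mulr_suml; apply: eq_bigr => u _; rewrite split.
case: (@fiber_cases _ _ f Z1 v) => [->|[w1 Zw1 ->]]; first by rewrite set0I Pr_set0 !mul0r.
case: (@fiber_cases _ _ g Z2 u) => [->|[w2 Zw2 ->]]; first by rewrite setI0 Pr_set0 mulr0 mul0r.
by rewrite (determined_fiberE det1 Zw1) (determined_fiberE det2 Zw2); apply: atoms.
Qed.

Lemma measurable_pair_fiber (d : measure_display) (T : measurableType d) (V W : Type)
  (f : T -> V) (g : T -> W) :
  (forall v, measurable (f @^-1` [set v])) -> (forall u, measurable (g @^-1` [set u])) ->
  forall q, measurable ((fun w => (f w, g w)) @^-1` [set q]).
Proof.
move=> mf mg [v u]; have -> : (fun w => (f w, g w)) @^-1` [set (v, u)] =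
    f @^-1` [set v] `&` g @^-1` [set u] by apply/seteqP; split => w /= => [[-> ->]|[-> ->]].
exact: measurableI.
Qed.

(** * The FAIM process *)

Section FAIMProcess.
Context (R : realType) (d : measure_display) (T : measurableType d)
  (B St : finType) (P : probability T R)
  (X : int -> T -> bool) (Y : int -> T -> B) (S : int -> T -> St)
  (H : FAIM P X Y S).

Lemma measurable_X k x : measurable [set w | X k w = x].
Proof. exact: (FAIM_measX H). Qed.

Lemma measurable_Y k y : measurable [set w | Y k w = y].
Proof. exact: (FAIM_measY H). Qed.

Lemma measurable_S k s : measurable [set w | S k w = s].
Proof. exact: (FAIM_measS H). Qed.

Definition window n (g h : 'I_n -> int) (w : T) : {ffun 'I_n -> bool * B * St} :=
  [ffun i => (X (g i) w, Y (g i) w, S (h i) w)].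

Lemma windowP n (g h : 'I_n -> int) w w' : window g h w = window g h w' ->
  forall i, [/\ X (g i) w = X (g i) w', Y (g i) w = Y (g i) w' & S (h i) w = S (h i) w'].
Proof. by move/ffunP=> e i; move: (e i); rewrite !ffunE => -[-> -> ->]. Qed.

Lemma measurable_window_fiber n (g h : 'I_n -> int) v :
  measurable (window g h @^-1` [set v]).
Proof.
have -> : window g h @^-1` [set v] = \bigcap_(i in setT)
    ([set w | X (g i) w = (v i).1.1] `&` [set w | Y (g i) w = (v i).1.2] `&`
     [set w | S (h i) w = (v i).2]).
  apply/seteqP; split => w /= => [<- i _|Hw]; first by rewrite ffunE.
  by apply/ffunP => i; rewrite ffunE; case: (Hw i I) => [[-> ->] ->]; case: (v i) => [[]].
apply: fin_bigcap_measurable => [|i _]; first exact: finite_finset.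
apply: measurableI; [apply: measurableI|]; last exact: measurable_S.
  exact: measurable_X.
exact: measurable_Y.
Qed.

Definition shifted_window (I : seq int) (t : int) :=
  window (fun i : 'I_(size I) => nth 0 I i + t) (fun i => nth 0 I i + t).

Lemma shifted_window_fiber I t s w : shifted_window I t @^-1` [set shifted_window I s w] =
  cylXYS X Y S I t (fun k => X (k + s) w) (fun k => Y (k + s) w) (fun k => S (k + s) w).
Proof.
apply/seteqP; split => w' /= => [e k kI|Hw].
  have kI' : (index k I < size I)%N by rewrite index_mem.
  by move/ffunP: e => /(_ (Ordinal kI')); rewrite !ffunE /= nth_index // => -[-> -> ->].
by apply/ffunP => i; rewrite !ffunE; case: (Hw _ (mem_nth 0 (ltn_ord i))) => -> -> ->.
Qed.

Lemma Pr_shifted_window_fiber I t v :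
  Pr P (shifted_window I t @^-1` [set v]) = Pr P (shifted_window I 0 @^-1` [set v]).
Proof.
have [[s [w <-]]|none] := pselect (exists s w, shifted_window I s w = v).
  by rewrite !shifted_window_fiber (FAIM_stationary H).
have empty t' : shifted_window I t' @^-1` [set v] = set0.
  by apply/seteqP; split => w //= e; apply: none; exists t', w.
by rewrite !empty.
Qed.

Lemma Pr_shifted_window_event I t (G : pred {ffun 'I_(size I) -> bool * B * St}) :
  Pr P [set w | G (shifted_window I t w)] = Pr P [set w | G (shifted_window I 0 w)].
Proof.
have fiber t' v : [set w | G (shifted_window I t' w)] `&` shifted_window I t' @^-1` [set v] =
    if G v then shifted_window I t' @^-1` [set v] else set0.
  apply/seteqP; split => w /= => [[Gw <-]|]; first by rewrite Gw /=.
  by case: ifP => // Gv /= fw; rewrite -fw in Gv.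
have m t' v :
    measurable ([set w | G (shifted_window I t' w)] `&` shifted_window I t' @^-1` [set v]).
  by rewrite fiber; case: ifP => _ //; apply: measurable_window_fiber.
rewrite (Pr_sum_fibers P (m t)) (Pr_sum_fibers P (m 0)); apply: eq_bigr => v _.
by rewrite !fiber; case: ifP => // _; apply: Pr_shifted_window_fiber.
Qed.

Lemma Pr_S_pair_shift t (n : nat) i k :
  Pr P ([set w | S t w = i] `&` [set w | S (t + n%:Z) w = k]) =
  Pr P ([set w | S 0 w = i] `&` [set w | S n%:Z w = k]).
Proof.
pose G (v : {ffun 'I_2 -> bool * B * St}) := ((v ord0).2 == i) && ((v ord_max).2 == k).
have E t' : [set w | S t' w = i] `&` [set w | S (t' + n%:Z) w = k] =
    [set w | G (shifted_window [:: 0; n%:Z] t' w)].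
  apply/seteqP; split => w; rewrite /G /= !ffunE /= add0r (addrC n%:Z).
    by case=> -> ->; rewrite !eqxx.
  by case/andP => /eqP -> /eqP ->.
by rewrite E Pr_shifted_window_event -E add0r.
Qed.

Lemma Pr_S_shift t s : Pr P [set w | S t w = s] = Pr P [set w | S 0 w = s].
Proof.
have E t' : [set w | S t' w = s] = [set w | S t' w = s] `&` [set w | S (t' + 0%:Z) w = s].
  by rewrite addr0 setIid.
by rewrite E Pr_S_pair_shift setIid.
Qed.

Definition depends_on (Ixy Is : pred int) (E : set T) :=
  forall w w', {in Ixy, forall k, X k w = X k w' /\ Y k w = Y k w'} ->
  {in Is, forall k, S k w = S k w'} -> E w -> E w'.

Definition future_window t n w :=
  (window (fun i : 'I_n => t + 1 + i%:Z) (fun i => t + 1 + i%:Z) w, S t w).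

Definition past_window t m w :=
  (window (fun i : 'I_m => t + 1 - i.+1%:Z) (fun i => t + 1 - i.+1%:Z - 1) w, S t w).

Lemma future_windowP t n w w' : future_window t n w = future_window t n w' ->
  {in [pred k | t < k <= t + n%:Z], forall k, X k w = X k w' /\ Y k w = Y k w'} /\
  {in [pred k | t <= k <= t + n%:Z], forall k, S k w = S k w'}.
Proof.
have idx k : t < k <= t + n%:Z -> exists i : 'I_n, k = t + 1 + i%:Z.
  case/andP => lo hi; have kn : (absz (k - t - 1)%R < n)%N by lia.
  by exists (Ordinal kn) => /=; lia.
case=> /windowP e eS; split=> k; rewrite inE.
  by move/idx => [i ->]; case: (e i).
case: (eqVneq k t) => [-> //|kt] /andP [lo hi].
by have [|i ->] := idx k; [lia | case: (e i)].
Qed.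

Lemma past_windowP t m w w' : past_window t m w = past_window t m w' ->
  {in [pred k | t - m%:Z < k <= t], forall k, X k w = X k w' /\ Y k w = Y k w'} /\
  {in [pred k | t - m%:Z <= k <= t], forall k, S k w = S k w'}.
Proof.
have idx k : t - m%:Z < k <= t -> exists i : 'I_m, k = t + 1 - i.+1%:Z.
  case/andP => lo hi; have km : (absz (t - k)%R < m)%N by lia.
  by exists (Ordinal km) => /=; lia.
case=> /windowP e eS; split=> k; rewrite inE => /andP [lo hi].
  by have [|i ->] := idx k; [lia | case: (e i)].
have [-> //|kt] := eqVneq k t; have {hi kt} hi : k < t by rewrite lt_neqAle kt.
have [|i ki] := idx (k + 1); first lia.
have -> : k = t + 1 - i.+1%:Z - 1 by rewrite -ki addrK.
by case: (e i).
Qed.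

Lemma future_window_fiber t n w1 :
  future_window t n @^-1` [set future_window t n w1] =
  futureXYS X Y S (t + 1) n (X^~ w1) (Y^~ w1) (S^~ w1) `&` [set w | S t w = S t w1].
Proof.
apply/seteqP; split => w; rewrite /= /future_window.
  by case=> /windowP e ->; split => // k kn; case: (e (Ordinal kn)).
case=> fut ->; congr pair; apply/ffunP => i; rewrite !ffunE.
by case: (fut i (ltn_ord i)) => -> -> ->.
Qed.

Lemma past_window_fiber t m w2 :
  past_window t m @^-1` [set past_window t m w2] =
  [set w | S t w = S t w2] `&` pastXYS X Y S (t + 1) m (X^~ w2) (Y^~ w2) (fun k => S (k - 1) w2).
Proof.
apply/seteqP; split => w; rewrite /= /past_window.
  case=> /windowP e ->; split => // k /andP [k_gt0 km].
  have km' : (k.-1 < m)%N by rewrite prednK.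
  by case: (e (Ordinal km')); rewrite /= prednK.
case=> -> past; congr pair; apply/ffunP => i; rewrite !ffunE.
by case: (past i.+1 (ltn_ord i)) => -> -> ->.
Qed.

Lemma measurable_future_window_fiber t n q : measurable (future_window t n @^-1` [set q]).
Proof.
by apply: measurable_pair_fiber => *; [apply: measurable_window_fiber | apply: measurable_S].
Qed.

Lemma measurable_past_window_fiber t m q : measurable (past_window t m @^-1` [set q]).
Proof.
by apply: measurable_pair_fiber => *; [apply: measurable_window_fiber | apply: measurable_S].
Qed.

Lemma depends_onI Ixy Is E F : depends_on Ixy Is E -> depends_on Ixy Is F ->
  depends_on Ixy Is (E `&` F).
Proof. by move=> depE depF w w' exy es [Ew Fw]; split; [apply: depE Ew | apply: depF Fw]. Qed.

Lemma depends_on_S t s Ixy Is : t \in Is -> depends_on Ixy Is [set w | S t w = s].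
Proof. by move=> tI w w' _ es /= <-; rewrite es. Qed.

Lemma depends_on_blockXY lo hi x y Ixy Is :
  (forall k : int, lo%:Z <= k <= hi%:Z -> k \in Ixy) -> depends_on Ixy Is (blockXY X Y lo hi x y).
Proof.
move=> sub w w' exy _ Bw k kr; have [<- <-] := Bw k kr.
by case: (exy k%:Z) => [|-> ->] //; apply: sub; lia.
Qed.

Lemma determined_future_window t n E :
  depends_on [pred k | t < k <= t + n%:Z] [pred k | t <= k <= t + n%:Z] E ->
  determined_by (future_window t n) E.
Proof. by move=> dep w w' /future_windowP [exy es]; apply: dep. Qed.

Lemma determined_past_window t m F :
  depends_on [pred k | t - m%:Z < k <= t] [pred k | t - m%:Z <= k <= t] F ->
  determined_by (past_window t m) F.
Proof. by move=> dep w w' /past_windowP [exy es]; apply: dep. Qed.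

Lemma measurable_depends_on t n E :
  depends_on [pred k | t < k <= t + n%:Z] [pred k | t <= k <= t + n%:Z] E -> measurable E.
Proof.
by move/determined_future_window; apply/measurable_determined/measurable_future_window_fiber.
Qed.

Lemma Pr_condindep t n m s0 E F :
  depends_on [pred k | t < k <= t + n%:Z] [pred k | t <= k <= t + n%:Z] E ->
  depends_on [pred k | t - m%:Z < k <= t] [pred k | t - m%:Z <= k <= t] F ->
  let C := [set w | S t w = s0] in
  Pr P (E `&` C `&` F) * Pr P C = Pr P (E `&` C) * Pr P (C `&` F).
Proof.
move=> depE depF C.
have setICC (A D : set T) : A `&` C `&` (C `&` D) = A `&` C `&` D.
  by rewrite setIA -(setIA A) setIid.
rewrite -setICC; apply: (Pr_setI_determined (f := future_window t n) (g := past_window t m)).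
- exact: measurable_future_window_fiber.
- exact: measurable_past_window_fiber.
- apply: determined_future_window; apply: depends_onI => //.
  by rewrite /C; apply: depends_on_S; rewrite inE; lia.
- apply: determined_past_window; apply: depends_onI => //.
  by rewrite /C; apply: depends_on_S; rewrite inE; lia.
move=> w1 w2 [_ Cw1] [Cw2 _].
rewrite future_window_fiber past_window_fiber Cw1 Cw2 -/C setICC.
by have := FAIM_condindep H (t + 1) n m (X^~ w1) (Y^~ w1) (S^~ w1) (X^~ w2) (Y^~ w2)
  (fun k => S (k - 1) w2) s0; rewrite /= addrK.
Qed.

Local Notation pi s := (Pr P [set w | S 0 w = s]).
Local Notation p := (ptransS P S).

(* [ptransS] divides by [pi s], and [x / 0 = 0] would contradict irreducibility *)
Lemma pi_gt0 s : 0 < pi s.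
Proof.
have [n [_ p_gt0]] := FAIM_irreducible H s s.
rewrite lt0r Pr_ge0 andbT; apply: contraTneq p_gt0 => pi0.
by rewrite /ptransS pi0 invr0 mulr0 ltxx.
Qed.

Lemma Pr_S_pair t n i k :
  Pr P ([set w | S t w = i] `&` [set w | S (t + n%:Z) w = k]) = pi i * p n i k.
Proof. by rewrite Pr_S_pair_shift /ptransS mulrC divfK // gt_eqF // pi_gt0. Qed.

Lemma p_ge0 n i k : 0 <= p n i k.
Proof. by rewrite /ptransS divr_ge0 // Pr_ge0. Qed.

Lemma pi_sum1 : \sum_s pi s = 1.
Proof.
have mS0 s : measurable (setT `&` S 0 @^-1` [set s]) by rewrite setTI; apply: measurable_S.
have -> : 1 = Pr P setT by rewrite /Pr probability_setT.
by rewrite (Pr_sum_fibers P mS0); apply: eq_bigr => s _; rewrite setTI.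
Qed.

Lemma p_sum1 n i : \sum_k p n i k = 1.
Proof.
have mSn k : measurable ([set w | S 0 w = i] `&` S n%:Z @^-1` [set k]).
  by apply: measurableI; apply: measurable_S.
by rewrite /ptransS -mulr_suml -(Pr_sum_fibers P mSn) divff // gt_eqF // pi_gt0.
Qed.

Lemma pi_invariant n k : \sum_i pi i * p n i k = pi k.
Proof.
have mS0 i : measurable ([set w | S n%:Z w = k] `&` S 0 @^-1` [set i]).
  by apply: measurableI; apply: measurable_S.
rewrite -(Pr_S_shift n%:Z) (Pr_sum_fibers P mS0); apply: eq_bigr => i _.
by rewrite -(Pr_S_pair 0) add0r setIC.
Qed.

Lemma p_CK m n i k : p (m + n) i k = \sum_j p m i j * p n j k.
Proof.
have dE : depends_on [pred l | m%:Z < l <= m%:Z + n%:Z] [pred l | m%:Z <= l <= m%:Z + n%:Z]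
    [set w | S (m%:Z + n%:Z) w = k] by apply: depends_on_S; rewrite inE; lia.
have dF : depends_on [pred l | m%:Z - m%:Z < l <= m%:Z] [pred l | m%:Z - m%:Z <= l <= m%:Z]
    [set w | S 0 w = i] by apply: depends_on_S; rewrite inE; lia.
have joint j : Pr P ([set w | S 0 w = i] `&` [set w | S (m%:Z + n%:Z) w = k] `&`
    [set w | S m%:Z w = j]) = pi i * p m i j * p n j k.
  have := Pr_condindep j dE dF; rewrite /= Pr_S_shift.
  rewrite (setIC [set w | S (m%:Z + n%:Z) w = k]) Pr_S_pair
    (setIC [set w | S m%:Z w = j] [set w | S 0 w = i]).
  have := Pr_S_pair 0 m i j; rewrite add0r => ->.
  have -> : [set w | S m%:Z w = j] `&` [set w | S (m%:Z + n%:Z) w = k] `&` [set w | S 0 w = i] =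
      [set w | S 0 w = i] `&` [set w | S (m%:Z + n%:Z) w = k] `&` [set w | S m%:Z w = j].
    by apply/seteqP; split => w /=; tauto.
  by move=> e; apply: (mulIf (lt0r_neq0 (pi_gt0 j))); rewrite e; ring.
have mZ j : measurable ([set w | S 0 w = i] `&` [set w | S (m%:Z + n%:Z) w = k] `&`
    S m%:Z @^-1` [set j]).
  by do 2?apply: measurableI; apply: measurable_S.
rewrite /ptransS PoszD (Pr_sum_fibers P mZ) mulr_suml; apply: eq_bigr => j _.
by rewrite joint mulrC !mulrA mulVf ?mul1r // lt0r_neq0 // pi_gt0.
Qed.

Lemma measurable_blockXY lo hi x y : measurable (blockXY X Y lo hi x y).
Proof.
by apply: (@measurable_depends_on (-1) hi.+1); apply: depends_on_blockXY => k; rewrite inE; lia.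
Qed.

Lemma depends_on_future_blockXY t lo hi x y : (t < lo)%N ->
  depends_on [pred k | t%:Z < k <= t%:Z + (hi - t)%:Z] [pred k | t%:Z <= k <= t%:Z + (hi - t)%:Z]
    (blockXY X Y lo hi x y).
Proof. by move=> t_lt; apply: depends_on_blockXY => k; rewrite inE; lia. Qed.

Lemma Pr_blockXY_states (N M L : nat) x y s s' : (L <= M)%N -> (M < N)%N ->
  let A := blockXY X Y 1 L x y in let Bl := blockXY X Y M.+1 N x y in
  Pr P (A `&` Bl `&` [set w | S L%:Z w = s] `&` [set w | S M%:Z w = s']) * pi s' =
  Pr P (A `&` [set w | S L%:Z w = s]) * Pr P (Bl `&` [set w | S M%:Z w = s']) * p (M - L) s s'.
Proof.
move=> LM MN A Bl; set SL := [set w | S L%:Z w = s]; set SM := [set w | S M%:Z w = s'].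
have given_SL : Pr P (A `&` Bl `&` SL `&` SM) * pi s = Pr P (A `&` SL) * Pr P (Bl `&` SM `&` SL).
  have dBM : depends_on [pred k | L%:Z < k <= L%:Z + (N - L)%:Z]
      [pred k | L%:Z <= k <= L%:Z + (N - L)%:Z] (Bl `&` SM).
    apply: depends_onI; first exact: depends_on_future_blockXY.
    by apply: depends_on_S; rewrite inE; lia.
  have dA : depends_on [pred k | L%:Z - L%:Z < k <= L%:Z] [pred k | L%:Z - L%:Z <= k <= L%:Z] A.
    by apply: depends_on_blockXY => k; rewrite inE; lia.
  have -> : A `&` Bl `&` SL `&` SM = Bl `&` SM `&` SL `&` A.
    by apply/seteqP; split => w /=; tauto.
  have := Pr_condindep s dBM dA; rewrite /= Pr_S_shift -/SL => ->.
  by rewrite mulrC setIC.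
have given_SM : Pr P (Bl `&` SM `&` SL) * pi s' = Pr P (Bl `&` SM) * (pi s * p (M - L) s s').
  have dSL : depends_on [pred k | M%:Z - (M - L)%:Z < k <= M%:Z]
      [pred k | M%:Z - (M - L)%:Z <= k <= M%:Z] SL by apply: depends_on_S; rewrite inE; lia.
  have := Pr_condindep s' (@depends_on_future_blockXY M M.+1 N x y (ltnSn M)) dSL.
  rewrite /= Pr_S_shift -/SM => ->.
  have LM_eq : L%:Z + (M - L)%:Z = M%:Z by lia.
  by rewrite (setIC SM) -(Pr_S_pair L%:Z) LM_eq.
apply: (mulIf (lt0r_neq0 (pi_gt0 s))).
by rewrite mulrAC given_SL -[LHS]mulrA given_SM; ring.
Qed.

Lemma Pr_blockXY_le (psi : nat -> R) : (forall n s s', p n s s' <= psi n * pi s') ->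
  forall (N M L : nat), (1 <= L)%N -> (L <= M)%N -> (M < N)%N ->
  forall (x : int -> bool) (y : int -> B),
    Pr P (blockXY X Y 1 L x y `&` blockXY X Y M.+1 N x y) <=
    psi (M - L)%N * Pr P (blockXY X Y 1 L x y) * Pr P (blockXY X Y M.+1 N x y).
Proof.
move=> p_le N M L _ LM MN x y.
have mA := measurable_blockXY 1 L x y; have mB := measurable_blockXY M.+1 N x y.
have mS Z k s : measurable Z -> measurable (Z `&` S k @^-1` [set s]).
  by move=> mZ; apply: measurableI => //; apply: measurable_S.
rewrite (Pr_sum_fibers P (f := S L%:Z)) => [|s]; last by apply/mS/measurableI.
rewrite (Pr_sum_fibers P (f := S L%:Z) (Z := blockXY X Y 1 L x y)) => [|s]; last exact: mS.
rewrite (Pr_sum_fibers P (f := S M%:Z) (Z := blockXY X Y M.+1 N x y)) => [|s]; last exact: mS.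
rewrite -mulrA big_distrl big_distrr /=; apply: ler_sum => s _.
rewrite (Pr_sum_fibers P (f := S M%:Z)) => [|s']; last by apply/mS/mS/measurableI.
rewrite 2!big_distrr /=; apply: ler_sum => s' _.
rewrite -(ler_pM2r (pi_gt0 s')) Pr_blockXY_states //.
rewrite [X in _ <= X](_ : _ = Pr P (blockXY X Y 1 L x y `&` S L%:Z @^-1` [set s]) *
  Pr P (blockXY X Y M.+1 N x y `&` S M%:Z @^-1` [set s']) * (psi (M - L)%N * pi s')); last by ring.
by rewrite ler_wpM2l // mulr_ge0 // Pr_ge0.
Qed.

End FAIMProcess.

Theorem lemma4 (R : realType) (d : measure_display) (T : measurableType d)
  (B St : finType) (P : probability T R)
  (X : int -> T -> bool) (Y : int -> T -> B) (S : int -> T -> St) :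
  FAIM P X Y S ->
  exists psi : nat -> R,
    (forall n, psi n.+1 <= psi n) /\
    (psi n @[n --> \oo] --> (1 : R)) /\
    forall (N M L : nat), (1 <= L)%N -> (L <= M)%N -> (M < N)%N ->
    forall (x : int -> bool) (y : int -> B),
      Pr P (blockXY X Y 1 L x y `&` blockXY X Y M.+1 N x y) <=
      psi (M - L)%N * Pr P (blockXY X Y 1 L x y) * Pr P (blockXY X Y M.+1 N x y).
Proof.
move=> H.
have [psi [psi_nonincreasing psi_cvg p_le]] := p_le_psi_pi (p_ge0 P S) (p_sum1 H) (p_CK H)
  (pi_invariant H) (pi_gt0 H) (pi_sum1 H) (FAIM_irreducible H) (FAIM_aperiodic H).
by exists psi; split => //; split => // N M L; exact: (Pr_blockXY_le H p_le).
Qed.
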